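(* Let $0<d\le 1$ and $0<\varepsilon<1/12$ be real numbers, and let $G$ be a balanced bipartite graph on $n$ vertices with (bipartite) density $d_G$, where $$n> \exp\!\big(10 \log (1/d)\, \log (1/\varepsilon)/\varepsilon^2\big).$$ Then the edge set of $G$ can be written as an edge-disjoint union $$E(G)=E(H_0)\cup E(H_1)\cup\dots\cup E(H_K),$$ where $H_0,H_1,\dots,H_K$ are balanced bipartite subgraphs of $G$ such that: for every $1\le i\le K$, $H_i$ is an $(\varepsilon, d-\varepsilon)$-super-regular pair with bipartite density at least $d$ and with at least $m$ vertices in each of its two parts, where $$m \ge d^{(10/\varepsilon^2)\log (1/\varepsilon)}\, n/2;$$ $H_0$ has bipartite density less than $d$; and $$K \le 2d_G \cdot d^{-(20/\varepsilon^2)\log (1/\varepsilon)}/d .$$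
   Context: All graphs are simple; $\log$ denotes the natural logarithm. A bipartite graph is balanced if its two parts have equal size. For a bipartite graph with parts $A,B$ (or disjoint vertex sets $A,B$ in a graph), $e(A,B)$ is the number of edges between $A$ and $B$ and the (bipartite) density is $d(A,B)=e(A,B)/(|A|\,|B|)$; for a bipartite graph ''density'' means this bipartite density between its two parts. A bipartite graph $H=(A,B;E)$ is $\varepsilon$-regular if $|d(A,B)-d(X,Y)|\le\varepsilon$ for all $X\subseteq A$, $Y\subseteq B$ with $|X|\ge\varepsilon|A|$, $|Y|\ge\varepsilon|B|$. It is an $(\varepsilon,\delta)$-super-regular pair if it is $\varepsilon$-regular, every vertex of $A$ has at least $\delta|B|$ neighbours in $B$, and every vertex of $B$ has at least $\delta|A|$ neighbours in $A$. *)

From HB Require Import structures.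
From mathcomp Require Import all_boot all_order all_algebra.
From mathcomp Require Import all_classical all_reals all_analysis.
Set Implicit Arguments. Unset Strict Implicit. Unset Printing Implicit Defensive.
Import Order.TTheory GRing.Theory Num.Theory.
Local Open Scope ring_scope.

(* A bipartite graph with parts inside finite types T (left) and U (right) is
   given by its edge set E : {set T * U}; (x, y) \in E means x ~ y. *)

Definition bdens (R : realType) (T U : finType) (E : {set T * U})
  (X : {set T}) (Y : {set U}) : R :=
  #|E :&: finset.setX X Y|%:R / (#|X| * #|Y|)%:R.

Definition eps_regular (R : realType) (T U : finType) (E : {set T * U})
  (X : {set T}) (Y : {set U}) (eps : R) : Prop :=
  forall (X' : {set T}) (Y' : {set U}), X' \subset X -> Y' \subset Y ->
    eps * #|X|%:R <= #|X'|%:R -> eps * #|Y|%:R <= #|Y'|%:R ->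
    `|bdens R E X Y - bdens R E X' Y'| <= eps.

Definition super_regular (R : realType) (T U : finType) (E : {set T * U})
  (X : {set T}) (Y : {set U}) (eps delta : R) : Prop :=
  [/\ eps_regular E X Y eps,
      (forall x, x \in X -> delta * #|Y|%:R <= #|[set y in Y | (x, y) \in E]|%:R) &
      (forall y, y \in Y -> delta * #|X|%:R <= #|[set x in X | (x, y) \in E]|%:R)].

From HB Require Import structures.
From mathcomp Require Import all_boot all_order all_algebra.
From mathcomp Require Import all_classical all_reals all_analysis.
From mathcomp Require Import zify ring lra.
Import Order.TTheory GRing.Theory Num.Theory.
Set Implicit Arguments. Unset Strict Implicit. Unset Printing Implicit Defensive.

(* Fix k = eps^2 / (10 log (1/eps)) and, among all balanced pairs (A, B) of
   vertex sets, take (X, Y) maximizing the potential e(A, B) |A|^k / |A|^2.  If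
   |X| = s and (X, Y) has density dl, then every balanced pair of size r spans at
   most dl (s/r)^k r^2 edges, and by averaging the same holds for unbalanced
   pairs with r the smaller side.  For r >= eps s the factor (s/r)^k is at most
   eps^-k = 1 + eta, which is the upper half of eps-regularity.  Bernoulli's
   inequality (s/r)^k <= 1 + k (s - r)/r bounds the edges leaving a subpair, and
   subtracting them from dl s^2 gives the lower half and the minimum degrees,
   with errors controlled by 2k + eta <= eps^2.  Comparing with the full pair gives
   dl >= d and s >= d^(1/k) N.  Deleting the edges of (X, Y) and recursing until
   the density drops below d yields the decomposition; every regular piece has at
   least d (d^(1/k) N)^2 edges, which bounds K. *)

(* e1 is the degree of a vertex of at most average degree in a set of b.+1
   vertices, e2 the number of edges at the other b vertices, and e3 that of a
   k-subset of those b vertices with at least their average degree. *)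
Lemma leq_avg_delete (e1 e2 e3 k b : nat) : (k <= b)%N -> (e1 * b.+1 <= e1 + e2)%N ->
  (e2 * k <= e3 * b)%N -> ((e1 + e2) * k <= e3 * b.+1)%N.
Proof.
move=> kb low avg; have [->|k0] := posnP k; first by rewrite muln0.
rewrite -(@leq_pmul2r b) ?(leq_trans k0 kb) //.
have lowk : (e1 * b * k <= e2 * k)%N by rewrite leq_mul2r -(leq_add2l e1) -mulnS low orbT.
have avgS : (e2 * k * b.+1 <= e3 * b * b.+1)%N by rewrite leq_mul2r avg orbT.
rewrite mulnDl mulnDl mulnAC (leq_trans (leq_add lowk (leqnn _))) // -mulnS.
by rewrite [e3 * _ * _]mulnAC.
Qed.

Section EdgeCount.
Variables (T U : finType) (G : {set T * U}).

Definition edges (A : {set T}) (B : {set U}) : nat := #|G :&: finset.setX A B|.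

Lemma edges_le_mul (A : {set T}) (B : {set U}) : (edges A B <= #|A| * #|B|)%N.
Proof. by rewrite /edges -cardsX subset_leq_card // subsetIr. Qed.

Lemma edges0l (B : {set U}) : edges finset.set0 B = 0%N.
Proof. by apply/eqP; rewrite -leqn0 (leq_trans (edges_le_mul _ _)) // cards0. Qed.

Lemma edges_splitl (A A1 : {set T}) (B : {set U}) : A1 \subset A ->
  edges A B = (edges A1 B + edges (A :\: A1) B)%N.
Proof.
move=> sA; rewrite /edges -(cardsID (finset.setX A1 B)); congr (_ + _)%N;
apply: eq_card => -[x y]; rewrite !inE /=; have := fintype.subsetP sA x.
all: by case: (x \in A1) => [/(_ isT) ->|_];
  case: (x \in A) (y \in B) ((x, y) \in G) => [] [] [].
Qed.

Lemma edges_splitr (A : {set T}) (B B1 : {set U}) : B1 \subset B ->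
  edges A B = (edges A B1 + edges A (B :\: B1))%N.
Proof.
move=> sB; rewrite /edges -(cardsID (finset.setX A B1)); congr (_ + _)%N;
apply: eq_card => -[x y]; rewrite !inE /=; have := fintype.subsetP sB y.
all: by case: (y \in B1) => [/(_ isT) ->|_];
  case: (x \in A) (y \in B) ((x, y) \in G) => [] [] [].
Qed.

Lemma edges_set1l (x : T) (B : {set U}) :
  edges [set x] B = #|[set y in B | (x, y) \in G]|.
Proof.
rewrite /edges -[in RHS](card_imset _ (fun y1 y2 (h : (x, y1) = (x, y2)) => f_equal snd h)).
apply: eq_card => -[a b]; rewrite !inE /=; apply/idP/idP.
  by case/and3P => h /eqP <- hb; apply/imsetP; exists b; rewrite ?inE ?hb.
by case/imsetP => y; rewrite inE => /andP [hy hg] [-> ->]; rewrite hg eqxx hy.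
Qed.

Lemma edges_set1r (A : {set T}) (y : U) :
  edges A [set y] = #|[set x in A | (x, y) \in G]|.
Proof.
rewrite /edges -[in RHS](card_imset _ (fun x1 x2 (h : (x1, y) = (x2, y)) => f_equal fst h)).
apply: eq_card => -[a b]; rewrite !inE /=; apply/idP/idP.
  by case/and3P => h ha /eqP <-; apply/imsetP; exists a; rewrite ?inE ?ha.
by case/imsetP => x; rewrite inE => /andP [hx hg] [-> ->]; rewrite hg eqxx hx.
Qed.

Lemma edges_suml (A : {set T}) (B : {set U}) :
  edges A B = (\sum_(x in A) edges [set x] B)%N.
Proof.
elim: {A}_.+1 {-2}A (ltnSn #|A|) => // n IH A hA.
have [->|[x xA]] := set_0Vmem A; first by rewrite big_set0 edges0l.
have sxA : [set x] \subset A by rewrite finset.sub1set.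
rewrite (big_setD1 x xA) (edges_splitl B sxA); congr (_ + _)%N.
by apply: IH; rewrite (cardsD1 x A) xA in hA.
Qed.

Lemma exists_low_degree (A : {set T}) (B : {set U}) : (0 < #|A|)%N ->
  exists2 x, x \in A & (edges [set x] B * #|A| <= edges A B)%N.
Proof.
move=> A0; set P := [exists x in A, edges [set x] B * #|A| <= edges A B]%N.
have [/exists_inP//|] := boolP P; rewrite negb_exists_in => /forall_inP low.
have : (\sum_(x in A) (edges A B).+1 <= \sum_(x in A) edges [set x] B * #|A|)%N.
  by apply: leq_sum => x /low; rewrite -ltnNge.
rewrite sum_nat_const -big_distrl -edges_suml /=; lia.
Qed.

Lemma exists_avg_subsetl (k : nat) (A : {set T}) (B : {set U}) : (k <= #|A|)%N ->
  exists A' : {set T},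
    [/\ A' \subset A, #|A'| = k & (edges A B * k <= edges A' B * #|A|)%N].
Proof.
elim: {A}_.+1 {-2}A (ltnSn #|A|) => // n IH A hA hk.
have [eA|ltkA] := eqVneq #|A| k; first by exists A; rewrite eA.
have {}ltkA : (k < #|A|)%N by rewrite ltn_neqAle eq_sym ltkA.
have [x xA low] := exists_low_degree B (leq_ltn_trans (leq0n k) ltkA).
have cA : #|A| = #|A :\ x|.+1 by rewrite (cardsD1 x A) xA.
rewrite cA in hA hk ltkA low.
have [A' [sA' cA' avg]] := IH (A :\ x) hA ltkA.
exists A'; split => //; first exact: fintype.subset_trans sA' (subsetDl _ _).
have sxA : [set x] \subset A by rewrite finset.sub1set.
by rewrite cA; rewrite (edges_splitl B sxA) in low *; apply: leq_avg_delete.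
Qed.
End EdgeCount.

Definition trgraph (T U : finType) (G : {set T * U}) : {set U * T} :=
  [set p | (p.2, p.1) \in G].

Lemma edges_tr (T U : finType) (G : {set T * U}) (A : {set T}) (B : {set U}) :
  edges (trgraph G) B A = edges G A B.
Proof.
have swap_inj : injective (fun p : T * U => (p.2, p.1)) by move=> [? ?] [? ?] [-> ->].
rewrite /edges -[in RHS](card_imset _ swap_inj); apply: eq_card => -[b a].
rewrite !inE /=; apply/and3P/imsetP => [[Gab Bb Aa]|[[a' b'] + [-> ->]]].
  by exists (a, b); rewrite // !inE Gab Aa Bb.
by rewrite !inE => /and3P [].
Qed.

Lemma exists_avg_subsetr (T U : finType) (G : {set T * U}) (k : nat)
    (A : {set T}) (B : {set U}) : (k <= #|B|)%N ->
  exists B' : {set U},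
    [/\ B' \subset B, #|B'| = k & (edges G A B * k <= edges G A B' * #|B|)%N].
Proof.
move=> kB; have [B' [sB' cB' avg]] := exists_avg_subsetl (trgraph G) A kB.
by exists B'; rewrite !edges_tr in avg.
Qed.

Local Open Scope ring_scope.

Section PowR.
Variable R : realType.

Lemma powR_le_bernoulli (k x : R) : 0 < k -> k < 1 -> 1 <= x ->
  x `^ k <= 1 + k * (x - 1).
Proof.
move=> k0 k1 x1.
have := @conjugate_powR R (x `^ k) 1 k^-1 (1 - k)^-1 (powR_ge0 _ _) ler01.
rewrite invr_gt0 k0 invr_gt0 subr_gt0 k1 !invrK addrC subrK => /(_ isT isT erefl).
rewrite -powRrM mulfV ?gt_eqF // powRr1 ?(le_trans ler01 x1) // powR1 mulr1.
by move/le_trans; apply; lra.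
Qed.

Lemma powR_le_mul_bernoulli (k a b : R) : 0 < k -> k < 1 -> 0 < a -> a <= b ->
  b `^ k <= a `^ k * (1 + k * (b - a) / a).
Proof.
move=> k0 k1 a0 ab.
have b0 : 0 <= b by apply: le_trans ab; apply: ltW.
have -> : b `^ k = a `^ k * (b / a) `^ k.
  by rewrite -powRM ?(ltW a0) ?divr_ge0 ?(ltW a0) // mulrC divfK ?gt_eqF.
rewrite ler_pM2l ?powR_gt0 //; apply: le_trans (powR_le_bernoulli k0 k1 _) _.
  by rewrite ler_pdivlMr // mul1r.
by rewrite lerD2l -mulrA ler_pM2l // mulrBl divff ?gt_eqF.
Qed.

Lemma powR_le_mul_ratio (k a b c : R) : 0 <= k -> 0 < a -> 0 <= b -> b <= c * a ->
  b `^ k <= a `^ k * c `^ k.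
Proof.
move=> k0 a0 b0 bca.
have c0 : 0 <= c by rewrite -(pmulr_lge0 _ a0) (le_trans b0).
rewrite -powRM ?(ltW a0) // mulrC; apply: ge0_ler_powR => //; rewrite nnegrE //.
exact: mulr_ge0 c0 (ltW a0).
Qed.
Lemma powRV_mul_le (k d a b : R) : 0 < k -> 0 <= d -> 0 <= a -> 0 <= b ->
  d * a `^ k <= b `^ k -> d `^ k^-1 * a <= b.
Proof.
move=> k0 d0 a0 b0 hab.
have k0' : 0 <= k^-1 by rewrite invr_ge0 ltW.
have := ge0_ler_powR k0' _ _ hab.
rewrite powRM ?powR_ge0 // -!powRrM mulfV ?gt_eqF // !powRr1 //; apply.
  by rewrite nnegrE mulr_ge0 ?powR_ge0.
by rewrite nnegrE powR_ge0.
Qed.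

End PowR.

Definition potential (R : realType) (T U : finType) (k : R) (G : {set T * U})
    (A : {set T}) (B : {set U}) : R :=
  (edges G A B)%:R * #|A|%:R `^ k / #|A|%:R ^+ 2.

Definition potential_bounded (R : realType) (T U : finType) (k c : R)
    (G : {set T * U}) : Prop :=
  forall (A : {set T}) (B : {set U}), #|A| = #|B| -> (0 < #|A|)%N ->
    potential k G A B <= c.

Section Potential.
Variables (R : realType) (k : R).

Lemma potential_bounded_tr (T U : finType) (c : R) (G : {set T * U}) :
  potential_bounded k c G -> potential_bounded k c (trgraph G).
Proof.
by move=> hG B A eBA B0; rewrite /potential edges_tr eBA; apply: hG; rewrite -?eBA.
Qed.

Lemma potentialE (T U : finType) (G : {set T * U}) (A : {set T}) (B : {set U}) :
  #|A| = #|B| -> potential k G A B = bdens R G A B * #|A|%:R `^ k.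
Proof. by move=> eAB; rewrite /potential /bdens -eAB natrM -expr2 mulrAC. Qed.

Lemma edges_le_of_potential_bounded (T U : finType) (c c' : R) (G : {set T * U})
    (A : {set T}) (B : {set U}) :
  potential_bounded k c G -> (0 < minn #|A| #|B|)%N ->
  c <= (minn #|A| #|B|)%:R `^ k * c' ->
  (edges G A B)%:R <= c' * #|A|%:R * #|B|%:R.
Proof.
move=> hG m0 hc; wlog AB : T U G A B hG m0 hc / (#|A| <= #|B|)%N.
  move=> hw; have [|/ltnW BA] := leqP #|A| #|B|; first exact: hw.
  rewrite -edges_tr mulrAC; apply: hw (potential_bounded_tr hG) _ _ BA;
  by rewrite minnC.
move/minn_idPl: (AB) => mA; rewrite mA in m0 hc.
have [B' [_ cB' avg]] := exists_avg_subsetr G A AB.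
set a := #|A|%:R in hc *; have a0 : 0 < a by rewrite ltr0n.
have ak0 : 0 < a `^ k by apply: powR_gt0.
have hB' : (edges G A B')%:R <= c' * a ^+ 2.
  have := hG A B' (esym cB') m0.
  rewrite /potential -/a ler_pdivrMr ?exprn_gt0 // => hpot.
  have := le_trans hpot (ler_wpM2r (exprn_ge0 2 (ltW a0)) hc).
  by rewrite -mulrA mulrC ler_pM2l.
rewrite -(ler_pM2r a0); move: avg; rewrite -(ler_nat R) !natrM -/a => avg.
apply: le_trans avg _; rewrite mulrAC -[c' * a * a]mulrA -expr2 ler_wpM2r //.
Qed.
End Potential.

Lemma bdens_ge0 (R : realType) (T U : finType) (G : {set T * U})
    (A : {set T}) (B : {set U}) : 0 <= bdens R G A B.
Proof. exact: divr_ge0. Qed.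

Lemma bdens_le1 (R : realType) (T U : finType) (G : {set T * U})
    (A : {set T}) (B : {set U}) : bdens R G A B <= 1.
Proof.
rewrite /bdens; have [AB0|AB0] := posnP (#|A| * #|B|).
  by rewrite AB0 invr0 mulr0 ler01.
by rewrite ler_pdivrMr ?ltr0n // mul1r ler_nat; apply: edges_le_mul.
Qed.

Lemma natr_edges_le_mul (R : numDomainType) (T U : finType) (G : {set T * U})
    (A : {set T}) (B : {set U}) : (edges G A B)%:R <= #|A|%:R * #|B|%:R :> R.
Proof. by rewrite -natrM ler_nat edges_le_mul. Qed.

Lemma natr_minn_maxn (R : numDomainType) (a b : nat) :
  (minn a b)%:R * (maxn a b)%:R = a%:R * b%:R :> R.
Proof. by case: leqP => _; rewrite // mulrC. Qed.

Section Maximizer.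
Variables (R : realType) (T U : finType) (G : {set T * U}).
Variables (X : {set T}) (Y : {set U}) (k eps eta : R).
Hypotheses (XY : #|X| = #|Y|) (X0 : (0 < #|X|)%N)
  (Gmax : potential_bounded k (potential k G X Y) G)
  (k0 : 0 < k) (k1 : k < 1) (eps0 : 0 < eps) (eps1 : eps < 1)
  (eta_eps : eps^-1 `^ k <= 1 + eta) (keta : 2 * k + eta <= eps ^+ 2).

Local Notation s := #|X|.
Local Notation dl := (bdens R G X Y).

Let s0 : 0 < s%:R :> R. Proof. by rewrite ltr0n. Qed.
Let dl0 : 0 <= dl. Proof. exact: bdens_ge0. Qed.
Let dl1 : dl <= 1. Proof. exact: bdens_le1. Qed.

Let eta0 : 0 <= eta.
Proof.
rewrite -(lerD2l 1) addr0 (le_trans _ eta_eps) // -[X in X <= _](powRr0 eps^-1).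
by apply: ler_powR; rewrite ?invf_ge1 ?ltW.
Qed.

Let k_le_eps : k <= eps.
Proof.
have eps2 : eps ^+ 2 <= eps by rewrite expr2 ger_pMl // ltW.
move: k0 keta eta0 => *; lra.
Qed.

Let eta_le_eps : eta <= eps.
Proof.
have eps2 : eps ^+ 2 <= eps by rewrite expr2 ger_pMl // ltW.
by move: k0 keta => *; lra.
Qed.

Let Gbound : potential_bounded k (dl * s%:R `^ k) G.
Proof. by rewrite -potentialE. Qed.

Lemma edges_maximizer : (edges G X Y)%:R = dl * s%:R ^+ 2.
Proof. by rewrite /bdens -XY natrM -expr2 divfK // expf_neq0 // gt_eqF. Qed.

Lemma edges_le_bernoulli (A : {set T}) (B : {set U}) :
  (0 < minn #|A| #|B|)%N -> (minn #|A| #|B| <= s)%N ->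
  (edges G A B)%:R <= dl * #|A|%:R * #|B|%:R
    + dl * k * (s%:R - (minn #|A| #|B|)%:R) * (maxn #|A| #|B|)%:R.
Proof.
move=> m0 ms; have m0' : 0 < (minn #|A| #|B|)%:R :> R by rewrite ltr0n.
set m := (minn _ _)%:R in m0' *; set M := (maxn _ _)%:R.
have mM : m * M = #|A|%:R * #|B|%:R by apply: natr_minn_maxn.
apply: le_trans (edges_le_of_potential_bounded
  (c' := dl * (1 + k * (s%:R - m) / m)) Gbound m0 _) _.
  by rewrite mulrCA ler_wpM2l // powR_le_mul_bernoulli // ler_nat.
suff -> : forall d : R, d * (1 + k * (s%:R - m) / m) * #|A|%:R * #|B|%:R =
  d * #|A|%:R * #|B|%:R + d * k * (s%:R - m) * M by [].
by move=> d; rewrite -!mulrA -mM; field; rewrite gt_eqF.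
Qed.

Lemma edges_le_maxn (A : {set T}) (B : {set U}) : maxn #|A| #|B| = s ->
  (edges G A B)%:R <= dl * #|A|%:R * #|B|%:R
    + k * s%:R * (s%:R - (minn #|A| #|B|)%:R).
Proof.
move=> Ms; have ms : (minn #|A| #|B| <= s)%N by rewrite -Ms geq_min leq_max leqnn.
have sm : 0 <= s%:R - (minn #|A| #|B|)%:R :> R by rewrite subr_ge0 ler_nat.
have [m0|m0] := posnP (minn #|A| #|B|).
  apply: le_trans (natr_edges_le_mul _ _ _ _) _.
  by rewrite -natr_minn_maxn m0 mul0r addr_ge0 // !mulr_ge0 // ltW.
apply: le_trans (edges_le_bernoulli m0 ms) _; rewrite lerD2l Ms.
set t := k * s%:R * _; have -> : dl * k * (s%:R - (minn #|A| #|B|)%:R) * s%:R = dl * t.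
  by rewrite /t; ring.
by rewrite ler_piMl // !mulr_ge0 // ltW.
Qed.

Lemma edges_le_large (A : {set T}) (B : {set U}) :
  eps * s%:R <= (minn #|A| #|B|)%:R ->
  (edges G A B)%:R <= dl * (1 + eta) * #|A|%:R * #|B|%:R.
Proof.
move=> em; have m0 : (0 < minn #|A| #|B|)%N.
  by rewrite -(ltr0n R) (lt_le_trans _ em) // mulr_gt0.
apply: edges_le_of_potential_bounded Gbound m0 _.
rewrite mulrCA ler_wpM2l //.
apply: le_trans (powR_le_mul_ratio (a := (minn #|A| #|B|)%:R) (c := eps^-1)
  (ltW k0) _ (ler0n _ _) _) _.
- by apply: (lt_le_trans _ em); rewrite mulr_gt0.
- by rewrite ler_pdivlMl.
- by rewrite ler_wpM2l ?powR_ge0.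
Qed.

Lemma edges_le_tall (A : {set T}) (B : {set U}) :
  (#|A| <= s)%N -> eps * s%:R <= #|B|%:R ->
  (edges G A B)%:R <= dl * #|A|%:R * #|B|%:R + (k + eta) * s%:R * #|B|%:R.
Proof.
move=> As eB; have As' : #|A|%:R <= s%:R :> R by rewrite ler_nat.
have b0 : 0 <= #|B|%:R :> R by [].
have [BA|AB] := leqP #|B| #|A|.
  have mB : minn #|A| #|B| = #|B| by apply/minn_idPr.
  apply: le_trans (edges_le_large _) _; first by rewrite mB.
  have -> : dl * (1 + eta) * #|A|%:R * #|B|%:R =
    dl * #|A|%:R * #|B|%:R + dl * (eta * #|A|%:R) * #|B|%:R by ring.
  rewrite lerD2l ler_wpM2r // (le_trans (ler_piMl _ dl1)) ?mulr_ge0 //.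
  by rewrite (le_trans (ler_wpM2l eta0 As')) // ler_wpM2r ?lerDr ?ltW.
have [A0|A0] := posnP #|A|.
  apply: le_trans (natr_edges_le_mul _ _ _ _) _.
  by rewrite A0 mul0r mulr0 mul0r add0r !mulr_ge0 // addr_ge0 // ltW.
have mA : minn #|A| #|B| = #|A| by apply/minn_idPl/ltnW.
have MB : maxn #|A| #|B| = #|B| by apply/maxn_idPr/ltnW.
apply: le_trans (edges_le_bernoulli _ _) _; rewrite ?mA //.
have sa : 0 <= s%:R - #|A|%:R :> R by rewrite subr_ge0.
rewrite MB lerD2l ler_wpM2r // -mulrA (le_trans (ler_piMl (mulr_ge0 (ltW k0) sa) dl1)) //.
have sas : s%:R - #|A|%:R <= s%:R :> R by rewrite gerBl.
by rewrite (le_trans (ler_wpM2l (ltW k0) sas)) // ler_wpM2r // lerDl.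
Qed.
Lemma edges_sub_le (X' : {set T}) (Y' : {set U}) :
  eps * s%:R <= #|X'|%:R -> eps * s%:R <= #|Y'|%:R ->
  (edges G X' Y')%:R <= (dl + eps) * #|X'|%:R * #|Y'|%:R.
Proof.
move=> eX eY; have em : eps * s%:R <= (minn #|X'| #|Y'|)%:R by case: leqP.
apply: le_trans (edges_le_large em) _; rewrite !ler_wpM2r // mulrDr mulr1 lerD2l.
exact: le_trans (ler_piMl eta0 dl1) eta_le_eps.
Qed.

Lemma edges_sub_ge (X' : {set T}) (Y' : {set U}) : X' \subset X -> Y' \subset Y ->
  eps * s%:R <= #|X'|%:R -> eps * s%:R <= #|Y'|%:R ->
  (dl - eps) * #|X'|%:R * #|Y'|%:R <= (edges G X' Y')%:R.
Proof.
move=> sX sY eX eY.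
have ps : (#|X'| <= s)%N by apply: subset_leq_card.
have qs : (#|Y'| <= s)%N by rewrite XY subset_leq_card.
have cX : #|X :\: X'| = (s - #|X'|)%N by rewrite cardsD (finset.setIidPr sX).
have cY : #|Y :\: Y'| = (s - #|Y'|)%N by rewrite cardsD (finset.setIidPr sY) XY.
have e1 := edges_le_maxn (A := X) (B := Y :\: Y').
rewrite cY (maxn_idPl (leq_subr _ _)) (minn_idPr (leq_subr _ _)) natrB // in e1.
have {e1}e1 := e1 erefl.
have e2 := edges_le_tall (A := X :\: X') (B := Y').
rewrite cX natrB // leq_subr in e2; have {e2}e2 := e2 isT eY.
have := edges_maximizer; rewrite (edges_splitr G X sY) (edges_splitl G Y' sX) !natrD.
have hc : (2 * k + eta) * s%:R * #|Y'|%:R <= eps * #|X'|%:R * #|Y'|%:R.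
  rewrite ler_wpM2r // (le_trans (ler_wpM2r (ltW s0) keta)) //.
  by rewrite expr2 -mulrA ler_wpM2l ?(ltW eps0).
move: e1 e2 hc; set S := s%:R; set p := #|X'|%:R; set q := #|Y'|%:R.
move=> *; lra.
Qed.

Let degree_ge (d e : nat) : (edges G X Y = d + e)%N ->
  (e%:R <= dl * (s%:R - 1) * s%:R + k * s%:R * (s%:R - (s%:R - 1))) ->
  (dl - eps) * s%:R <= d%:R.
Proof.
move=> de he; have := edges_maximizer; rewrite de natrD.
have ks : k * s%:R <= eps * s%:R by rewrite ler_wpM2r // ltW.
by move: he ks; set S := s%:R => *; lra.
Qed.

Lemma degree_ge_l (x : T) : x \in X ->
  (dl - eps) * s%:R <= #|[set y in Y | (x, y) \in G]|%:R.
Proof.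
move=> xX; have sx : [set x] \subset X by rewrite finset.sub1set.
rewrite -edges_set1l; apply: degree_ge (edges_splitl G Y sx) _.
have cX : #|X :\ x| = s.-1 by rewrite (cardsD1 x X) xX.
have := edges_le_maxn (A := X :\ x) (B := Y).
by rewrite cX -XY (maxn_idPr (leq_pred _)) (minn_idPl (leq_pred _)) -subn1 natrB //; apply.
Qed.

Lemma degree_ge_r (y : U) : y \in Y ->
  (dl - eps) * s%:R <= #|[set x in X | (x, y) \in G]|%:R.
Proof.
move=> yY; have sy : [set y] \subset Y by rewrite finset.sub1set.
rewrite -edges_set1r; apply: degree_ge (edges_splitr G X sy) _.
have cY : #|Y :\ y| = s.-1 by rewrite XY (cardsD1 y Y) yY.
have := edges_le_maxn (A := X) (B := Y :\ y).
rewrite cY (maxn_idPl (leq_pred _)) (minn_idPr (leq_pred _)) -subn1 natrB //.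
by rewrite mulrAC; apply.
Qed.

Lemma maximizer_super_regular : super_regular G X Y eps (dl - eps).
Proof.
split=> [X' Y' sX sY eX eY|x /degree_ge_l|y /degree_ge_r]; rewrite -?XY //.
rewrite -XY in eY; have p0 : 0 < #|X'|%:R * #|Y'|%:R :> R.
  by apply: mulr_gt0; [apply: lt_le_trans eX|apply: lt_le_trans eY]; rewrite mulr_gt0.
have -> : bdens R G X' Y' = (edges G X' Y')%:R / (#|X'|%:R * #|Y'|%:R).
  by rewrite /bdens natrM.
have lo : dl - eps <= (edges G X' Y')%:R / (#|X'|%:R * #|Y'|%:R).
  by rewrite ler_pdivlMr // mulrA edges_sub_ge.
have hi : (edges G X' Y')%:R / (#|X'|%:R * #|Y'|%:R) <= dl + eps.
  by rewrite ler_pdivrMr // mulrA edges_sub_le.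
by rewrite ler_norml; move: lo hi => *; apply/andP; split; lra.
Qed.

End Maximizer.

Lemma super_regularW (R : realType) (T U : finType) (E : {set T * U})
    (X : {set T}) (Y : {set U}) (eps delta delta' : R) :
  delta' <= delta -> super_regular E X Y eps delta -> super_regular E X Y eps delta'.
Proof.
move=> dd [reg degX degY]; split=> // [x /degX|y /degY]; apply: le_trans;
by rewrite ler_wpM2r.
Qed.

Lemma exists_superregular_pair (R : realType) (T : finType) (G : {set T * T})
    (d k eps eta : R) :
  0 < k -> k < 1 -> 0 < eps -> eps < 1 -> eps^-1 `^ k <= 1 + eta ->
  2 * k + eta <= eps ^+ 2 -> 0 < d -> d <= bdens R G finset.setT finset.setT ->
  exists X Y : {set T}, [/\ #|X| = #|Y|, d `^ k^-1 * #|T|%:R <= #|X|%:R,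
    super_regular G X Y eps (d - eps) & d <= bdens R G X Y].
Proof.
move=> k0 k1 eps0 eps1 eta_eps keta d0 dG.
have cT : #|(finset.setT : {set T})| = #|T| by rewrite cardsT.
have T0 : (0 < #|T|)%N.
  rewrite lt0n; apply: contraTneq (lt_le_trans d0 dG) => T0.
  by rewrite /bdens cT T0 mul0n invr0 mulr0 ltxx.
pose P (p : {set T} * {set T}) := (#|p.1| == #|p.2|) && (0 < #|p.1|)%N.
have PT : P (finset.setT, finset.setT) by rewrite /P /= eqxx cT T0.
have [[X Y] /andP[/= /eqP XY X0] Xmax] := arg_maxP (fun p => potential k G p.1 p.2) PT.
have Gmax : potential_bounded k (potential k G X Y) G.
  by move=> A B AB A0; apply: (Xmax (A, B)); rewrite /P /= AB eqxx -AB.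
have := Xmax _ PT; rewrite /= !potentialE // cT => potT.
have dl1 := bdens_le1 R G X Y; have sN : #|X|%:R <= #|T|%:R :> R.
  by rewrite ler_nat -cT subset_leq_card // subsetT.
have skN : #|X|%:R `^ k <= #|T|%:R `^ k by rewrite ge0_ler_powR // ?nnegrE // ltW.
have dTk : d * #|T|%:R `^ k <= bdens R G X Y * #|X|%:R `^ k.
  by apply: le_trans potT; rewrite ler_wpM2r ?powR_ge0.
have dld : d <= bdens R G X Y.
  have sk0 : 0 < #|X|%:R `^ k by rewrite powR_gt0 // ltr0n.
  by rewrite -(ler_pM2r sk0) (le_trans _ dTk) // ler_wpM2l // ltW.
exists X, Y; split => //.
- apply: powRV_mul_le => //; first exact: ltW.
  by apply: le_trans dTk _; rewrite ler_piMl ?powR_ge0.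
- apply: super_regularW (maximizer_super_regular XY X0 Gmax k0 k1 eps0 eps1 eta_eps keta).
  by rewrite lerD2r.
Qed.

Section Restriction.
Variables (R : realType) (T U : finType) (G : {set T * U}) (X : {set T}) (Y : {set U}).

Lemma bdens_restrict (X' : {set T}) (Y' : {set U}) : X' \subset X -> Y' \subset Y ->
  bdens R (G :&: finset.setX X Y) X' Y' = bdens R G X' Y'.
Proof.
move=> sX sY; rewrite /bdens -finset.setIA; congr (#|G :&: _|%:R / _).
by apply/finset.setIidPr/setXS.
Qed.

Lemma super_regular_restrict (eps delta : R) :
  super_regular G X Y eps delta ->
  super_regular (G :&: finset.setX X Y) X Y eps delta.
Proof.
case=> reg degX degY; split.
- by move=> X' Y' sX sY; rewrite !bdens_restrict //; apply: reg.
- move=> x xX; apply: le_trans (degX x xX) _; rewrite ler_nat subset_leq_card //.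
  by apply/fintype.subsetP => y; rewrite !inE xX => /andP[-> ->].
- move=> y yY; apply: le_trans (degY y yY) _; rewrite ler_nat subset_leq_card //.
  by apply/fintype.subsetP => x; rewrite !inE yY => /andP[-> ->].
Qed.
End Restriction.

Lemma edges_ge_bdens (R : realType) (T U : finType) (G : {set T * U})
    (X : {set T}) (Y : {set U}) (d : R) :
  d <= bdens R G X Y -> d * #|X|%:R * #|Y|%:R <= (edges G X Y)%:R.
Proof.
rewrite /bdens -/(edges G X Y) -mulrA -natrM; have [->|XY0] := posnP (#|X| * #|Y|).
  by rewrite mulr0.
by rewrite ler_pdivlMr // ltr0n.
Qed.

Lemma edges_gt0 (R : realType) (T U : finType) (G : {set T * U})
    (X : {set T}) (Y : {set U}) : 0 < bdens R G X Y -> (0 < edges G X Y)%N.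
Proof.
by rewrite lt0n; apply: contraTneq => e0; rewrite /bdens -/(edges G X Y) e0 mul0r ltxx.
Qed.

Definition regular_decomposition (R : realType) (T : finType) (d eps t : R)
    (G : {set T * T}) (K : nat) (X Y : nat -> {set T}) (F : nat -> {set T * T}) :=
  [/\ G = \bigcup_(i < K.+1) F i /\
        (forall i j, (i <= K)%N -> (j <= K)%N -> i != j -> [disjoint F i & F j]),
      (forall i, (i <= K)%N -> #|X i| = #|Y i| /\ F i \subset G :&: finset.setX (X i) (Y i)),
      (forall i, (1 <= i <= K)%N ->
         [/\ super_regular (F i) (X i) (Y i) eps (d - eps),
             d <= bdens R (F i) (X i) (Y i) & t <= #|X i|%:R]),
      bdens R (F 0%N) (X 0%N) (Y 0%N) < d &
      K%:R * (d * t ^+ 2) <= #|G|%:R].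

Section Decomposition.
Variables (R : realType) (T : finType) (d eps t : R).

Lemma regular_decomposition_sparse (G : {set T * T}) :
  bdens R G finset.setT finset.setT < d ->
  regular_decomposition d eps t G 0 (fun=> finset.setT) (fun=> finset.setT) (fun=> G).
Proof.
move=> sparse; split=> //; last by rewrite mul0r.
- split=> [|i j]; first by rewrite big_ord1.
  by rewrite !leqn0 => /eqP -> /eqP ->; rewrite eqxx.
- by move=> i _; split=> //; apply/fintype.subsetP => -[x y] Gxy; rewrite !inE Gxy.
- by case=> [|i] /andP[].
Qed.

Lemma regular_decomposition_add (G : {set T * T}) (X Y : {set T}) (K : nat)
    (Xs Ys : nat -> {set T}) (Fs : nat -> {set T * T}) :
  0 <= d -> #|X| = #|Y| -> super_regular G X Y eps (d - eps) -> d <= bdens R G X Y ->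
  0 <= t -> t <= #|X|%:R ->
  regular_decomposition d eps t (G :\: finset.setX X Y) K Xs Ys Fs ->
  regular_decomposition d eps t G K.+1
    (fun i => if i == K.+1 then X else Xs i) (fun i => if i == K.+1 then Y else Ys i)
    (fun i => if i == K.+1 then G :&: finset.setX X Y else Fs i).
Proof.
move=> d0 XY sr dX t0 tX [[GU disj] sub reg sparse cnt]; set S := finset.setX X Y.
have FsS i : (i <= K)%N -> Fs i \subset G :\: S.
  by case/sub => _ /fintype.subset_trans; apply; apply: finset.subsetIl.
have disjS i : (i <= K)%N -> [disjoint G :&: S & Fs i].
  move=> iK; rewrite disjoint_sym finset.disjoints_subset (fintype.subset_trans (FsS i iK)) //.
  rewrite finset.setDE finset.setCI.
  by rewrite (fintype.subset_trans (finset.subsetIr _ _)) // finset.subsetUr.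
have neqK i : (i <= K)%N -> (i == K.+1) = false by move=> iK; rewrite ltn_eqF.
have leK i : (i <= K.+1)%N -> i != K.+1 -> (i <= K)%N.
  by move=> iK iK'; rewrite -ltnS ltn_neqAle iK' iK.
split.
- split=> [|i j iK jK ij].
    rewrite big_ord_recr /= eqxx (eq_bigr (fun i : 'I_K.+1 => Fs i)) => [|i _].
      by rewrite -GU finset.setUC finset.setID.
    by rewrite neqK // -ltnS.
  case: eqP => [iK'|/eqP iK']; case: eqP => [jK'|/eqP jK'].
  + by move: ij; rewrite iK' jK' eqxx.
  + exact: disjS (leK j jK jK').
  + by rewrite disjoint_sym; apply: disjS (leK i iK iK').
  + exact: disj (leK i iK iK') (leK j jK jK') ij.
- move=> i iK; case: eqP => [_|/eqP iK']; first by split.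
  have [-> sFs] := sub i (leK i iK iK'); split=> //.
  by rewrite (fintype.subset_trans sFs) // finset.setSI // finset.subsetDl.
- move=> i /andP[i1 iK]; case: eqP => [_|/eqP iK'].
    by split; rewrite ?bdens_restrict //; apply: super_regular_restrict.
  by apply: reg; rewrite i1 leK.
- by [].
rewrite -(cardsID S G) natrD -nat1r mulrDl mul1r lerD //.
apply: le_trans (edges_ge_bdens dX); rewrite -XY -mulrA -expr2 ler_wpM2l //.
by rewrite lerXn2r // nnegrE.
Qed.

Lemma regular_decomposition_min_size (G : {set T * T}) (K : nat)
    (X Y : nat -> {set T}) (F : nat -> {set T * T}) :
  regular_decomposition d eps t G K X Y F -> t <= #|T|%:R ->
  exists m : nat, t <= m%:R /\
    forall i, (1 <= i <= K)%N -> (m <= #|X i|)%N /\ (m <= #|Y i|)%N.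
Proof.
move=> [_ sub reg _ _] tT; have ex : exists m : nat, t <= m%:R by exists #|T|.
case: (ex_minnP ex) => m tm mmin; exists m; split=> // i iK.
by have [_ _ /mmin] := reg i iK; have [<-] := sub i (proj2 (andP iK)).
Qed.
End Decomposition.

Lemma regular_decomposition_size_le (R : realType) (T : finType) (d eps a : R)
    (G : {set T * T}) (K : nat) (X Y : nat -> {set T}) (F : nat -> {set T * T}) :
  0 < d -> (0 < #|T|)%N -> regular_decomposition d eps (d `^ a * #|T|%:R) G K X Y F ->
  K%:R <= bdens R G finset.setT finset.setT * d `^ (- (a + a)) / d.
Proof.
move=> d0 T0 [_ _ _ _ count].
have c0 : 0 < d * (d `^ a * #|T|%:R) ^+ 2.
  by rewrite mulr_gt0 ?exprn_gt0 ?mulr_gt0 ?powR_gt0 ?ltr0n.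
have GT : G :&: finset.setX finset.setT finset.setT = G.
  by apply/setP => -[x y]; rewrite !inE !andbT.
rewrite /bdens GT !cardsT powRN powRD ?(gt_eqF d0) ?implybT //.
have -> : #|G|%:R / (#|T| * #|T|)%:R * (d `^ a * d `^ a)^-1 / d =
    #|G|%:R / (d * (d `^ a * #|T|%:R) ^+ 2).
  by field; rewrite !gt_eqF ?powR_gt0 ?ltr0n.
by rewrite ler_pdivlMr.
Qed.

Lemma exists_regular_decomposition (R : realType) (T : finType) (d k eps eta : R)
    (G : {set T * T}) :
  0 < k -> k < 1 -> 0 < eps -> eps < 1 -> eps^-1 `^ k <= 1 + eta ->
  2 * k + eta <= eps ^+ 2 -> 0 < d ->
  exists K X Y F, regular_decomposition d eps (d `^ k^-1 * #|T|%:R) G K X Y F.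
Proof.
move=> k0 k1 eps0 eps1 eta_eps keta d0.
elim: {G}_.+1 {-2}G (ltnSn #|G|) => // n IH G Gn.
have [sparse|dense] := ltP (bdens R G finset.setT finset.setT) d.
  by exists 0%N, (fun=> finset.setT), (fun=> finset.setT), (fun=> G);
  apply: regular_decomposition_sparse.
have [X [Y [XY tX sr dX]]] :=
  exists_superregular_pair k0 k1 eps0 eps1 eta_eps keta d0 dense.
have GS : (#|G :\: finset.setX X Y| < n)%N.
  have S0 := edges_gt0 (lt_le_trans d0 dX); rewrite -ltnS (leq_ltn_trans _ Gn) //.
  by rewrite -(cardsID (finset.setX X Y) G) -{1}(add0n #|_ :\: _|) ltn_add2r.
have [K [Xs [Ys [Fs dec]]]] := IH _ GS.
by do 4!eexists; apply: regular_decomposition_add dec => //;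
  rewrite ?mulr_ge0 ?powR_ge0 // ltW.
Qed.

Section Constants.
Variable R : realType.

Lemma ln_inv_ge (x : R) : 0 < x -> 1 - x <= ln x^-1.
Proof.
move=> x0; rewrite lnV ?posrE //.
have : ln x <= x - 1.
  by have := @le_ln1Dx R (x - 1); rewrite addrCA subrr addr0; apply; lra.
lra.
Qed.

Lemma expR_sub1_le (z : R) : 0 <= z -> z <= 2^-1 -> expR z - 1 <= 2 * z.
Proof.
move=> z0 z2; have ez : expR z * expR (- z) = 1 by rewrite -expRD subrr expR0.
have : expR z * (1 - z) <= 1.
  by rewrite -[X in _ <= X]ez ler_wpM2l ?expR_ge0 // expR_ge1Dx.
have := expR_ge0 z; nra.
Qed.

Lemma regularity_exponent (eps : R) : 0 < eps -> eps < 1 / 12 ->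
  let k := (10 / eps ^+ 2 * ln (1 / eps))^-1 in
  [/\ 0 < k, k < 1 & 2 * k + (eps^-1 `^ k - 1) <= eps ^+ 2].
Proof.
move=> eps0 eps12 k; rewrite div1r in k *.
have hL : 1 - eps <= ln eps^-1 by apply: ln_inv_ge.
have e2 : eps ^+ 2 < 1 / 144.
  have -> : 1 / 144 = (1 / 12) ^+ 2 :> R by rewrite expr2; field.
  by rewrite ltrXn2r // ltW.
have e20 : 0 < eps ^+ 2 by rewrite exprn_gt0.
have L0 : 0 < ln eps^-1 by lra.
have kE : k * (10 * ln eps^-1) = eps ^+ 2.
  by rewrite /k; field; rewrite !gt_eqF.
have k0 : 0 < k by rewrite /k invr_gt0 mulr_gt0 ?divr_gt0.
have k11 : k * (10 * (11 / 12)) <= eps ^+ 2.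
  by rewrite -kE ler_wpM2l ?ltW //; lra.
have -> : eps^-1 `^ k = expR (eps ^+ 2 / 10).
  rewrite /powR ifF ?invr_eq0 ?gt_eqF //; congr expR.
  by rewrite -kE; field.
have := @expR_sub1_le (eps ^+ 2 / 10); split => //; lra.
Qed.
End Constants.

Unset Implicit Arguments.

Theorem theorem2p5 (R : realType) (d eps : R) (N : nat)
    (E : {set 'I_N * 'I_N}) :
  0 < d -> d <= 1 -> 0 < eps -> eps < 1 / 12 ->
  expR (10 * ln (1 / d) * ln (1 / eps) / eps ^+ 2) < (2 * N)%:R ->
  exists (K : nat) (X Y : nat -> {set 'I_N}) (F : nat -> {set 'I_N * 'I_N}),
    [/\ E = \bigcup_(i < K.+1) F i /\
          (forall i j, (i <= K)%N -> (j <= K)%N -> i != j -> [disjoint F i & F j]),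
        (forall i, (i <= K)%N ->
           #|X i| = #|Y i| /\ F i \subset E :&: finset.setX (X i) (Y i)),
        (forall i, (1 <= i <= K)%N ->
           super_regular (F i) (X i) (Y i) eps (d - eps) /\
           d <= bdens R (F i) (X i) (Y i)),
        ((exists m : nat,
           (d `^ (10 / eps ^+ 2 * ln (1 / eps))) * (2 * N)%:R / 2 <= m%:R /\
           (forall i, (1 <= i <= K)%N -> (m <= #|X i|)%N /\ (m <= #|Y i|)%N)) /\
         bdens R (F 0%N) (X 0%N) (Y 0%N) < d ) &
        K%:R <= 2 * bdens R E (finset.setT : {set 'I_N}) (finset.setT : {set 'I_N})
                  * (d `^ (- (20 / eps ^+ 2 * ln (1 / eps)))) / d].
Proof.
move=> d0 d1 eps0 eps12 nN; have eps1 : eps < 1 by lra.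
have N0 : (0 < N)%N by move: (lt_trans (expR_gt0 _) nN); rewrite ltr0n muln_gt0.
have [] := regularity_exponent eps0 eps12.
set a := 10 / eps ^+ 2 * ln (1 / eps) => k0 k1 keta.
have eta_eps : eps^-1 `^ a^-1 <= 1 + (eps^-1 `^ a^-1 - 1) by rewrite addrC subrK.
have [K [X [Y [F dec]]]] := exists_regular_decomposition E k0 k1 eps0 eps1 eta_eps keta d0.
rewrite invrK in dec.
have Da : d `^ a <= 1.
  have a0 : 0 <= a by rewrite -invr_ge0 ltW.
  by have := ge0_ler_powR a0 _ _ d1; rewrite powR1 !nnegrE ler01 ltW //; apply.
have [|m [am mX]] := regular_decomposition_min_size dec; first by rewrite ler_piMl.
exists K, X, Y, F; have [part sub reg sparse _] := dec; split=> //.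
- by move=> i /reg[].
- split=> //; exists m; split=> //.
  by move: am; rewrite card_ord natrM mulrCA mulrAC divff ?mul1r.
apply: le_trans (regular_decomposition_size_le d0 _ dec) _; first by rewrite card_ord.
have -> : 20 / eps ^+ 2 * ln (1 / eps) = a + a by rewrite /a; ring.
have : 0 <= bdens R E finset.setT finset.setT * d `^ (- (a + a)) / d.
  by rewrite !mulr_ge0 ?bdens_ge0 ?powR_ge0 // invr_ge0 ltW.
lra.
Qed.
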